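(* Let $G=K_{s_1,s_2,\dots,s_n}$ be a simple complete multipartite graph with $n$ parts and let $q$ be a prime power with $q\ge n-1$. Then $\operatorname{mr}(\mathbb{F}_q,G)\le 3$.
   Context: $K_{s_1,\dots,s_n}$ is the join of independent sets of sizes $s_1,\dots,s_n$ (every two vertices in different parts adjacent, no edges inside a part). For a field $F$ and a simple graph $G$ on vertices $\{1,\dots,n\}$, $S(F,G)$ is the set of symmetric $n\times n$ matrices $A$ over $F$ with $a_{ij}\neq 0$ for $i\ne j$ iff $ij$ is an edge of $G$ (diagonal entries unrestricted), and $\operatorname{mr}(F,G)=\min\{\operatorname{rank}A: A\in S(F,G)\}$. *)

From HB Require Import structures.
From mathcomp Require Import all_boot all_order all_algebra.
Set Implicit Arguments. Unset Strict Implicit. Unset Printing Implicit Defensive.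
Import GRing.Theory.
Local Open Scope ring_scope.

(* Complete multipartite graph: vertex v lies in part [p v]; two vertices are
   adjacent iff they lie in different parts. *)
Definition multipartite_adj (N n : nat) (p : 'I_N -> 'I_n) : rel 'I_N :=
  fun u v => p u != p v.

Definition inS (F : fieldType) (N : nat) (G : rel 'I_N) (A : 'M[F]_N) : bool :=
  (A^T == A) && [forall i, forall j, (i != j) ==> ((A i j != 0) == G i j)].

(* mr(F,G) = min { rank A : A in S(F,G) }, for a finite field F
   (the min is over a finite, nonempty set when G is a simple graph;
   N = number of vertices is an upper bound for every rank). *)
Definition mr (F : finFieldType) (N : nat) (G : rel 'I_N) : nat :=
  \big[minn/N]_(A : 'M[F]_N | inS G A) \rank A.

From HB Require Import structures.
From mathcomp Require Import all_boot all_order all_algebra.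
Local Open Scope ring_scope.
Import GRing.Theory.

(* Label the n parts of G injectively by points of the projective
   line P^1(F) = F u {oo}, which has #|F| + 1 >= n points.  On P^1(F) consider
   the symmetric "squared distance" d(a, b) = (a - b)^2 on affine points,
   d(a, oo) = d(oo, a) = 1 and d(oo, oo) = 0; it vanishes exactly on the
   diagonal.  The matrix A with A_uv = d(label u, label v) is then symmetric and
   its off-diagonal entry A_uv is nonzero iff u and v lie in different parts,
   i.e. A belongs to S(F, G).  Finally d is a bilinear form in the quadratic
   Veronese coordinates (1, a, a^2) of its arguments, so A factors through
   F^3 and has rank at most 3. *)

Lemma mr_le_rank {F : finFieldType} {N : nat} {G : rel 'I_N} {A : 'M[F]_N} :
  inS G A -> (mr F G <= \rank A)%N.
Proof. by move=> GA; rewrite /mr -minEnat -leEnat; exact: Order.TotalTheory.bigmin_le_cond. Qed.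

Lemma ord_injection {T : finType} {n : nat} :
  (n <= #|T|)%N -> {g : 'I_n -> T | injective g}.
Proof.
move=> le_nT; exists (fun k => enum_val (widen_ord le_nT k)).
by move=> k l /enum_val_inj eq_kl; apply: val_inj; exact: (congr1 val eq_kl).
Qed.

Section ProjectiveLine.
Variable F : fieldType.

(* Squared distance on P^1(F) = option F, where None is the point at infinity. *)
Definition sqdist (x y : option F) : F :=
  match x, y with
  | Some a, Some b => (a - b) ^+ 2
  | None, None => 0
  | _, _ => 1
  end.

Lemma sqdistC x y : sqdist x y = sqdist y x.
Proof. by case: x y => [a|] [b|] //=; rewrite -sqrrN opprB. Qed.

Lemma sqdist_eq0 x y : (sqdist x y == 0) = (x == y).
Proof.
case: x y => [a|] [b|] /=; rewrite ?oner_eq0 ?eqxx //.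
by rewrite sqrf_eq0 subr_eq0.
Qed.

Definition veronese (x : option F) : 'rV[F]_3 :=
  if x is Some a then \row_k [:: 1; a; a ^+ 2]`_k else \row_k [:: 0; 0; 1]`_k.

Definition sqdist_gram : 'M[F]_3 :=
  \matrix_(i, j) (nth [::] [:: [:: 0; 0; 1]; [:: 0; -2; 0]; [:: 1; 0; 0]] i)`_j.

Lemma sqdist_veronese x y :
  sqdist x y = (veronese x *m sqdist_gram *m (veronese y)^T) ord0 ord0.
Proof.
case: x y => [a|] [b|];
  rewrite !mxE !big_ord_recr !big_ord0 /= !add0r !mxE !big_ord_recr !big_ord0 /= !add0r !mxE /=;
  rewrite ?(mul0r, mulr0, mul1r, mulr1, addr0, add0r) //.
by rewrite sqrrB mulrN mulNr mulr_natr -mulrnAl.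
Qed.

End ProjectiveLine.
Arguments sqdist {F}.
Arguments veronese {F}.

Section LabelledMatrix.
Variables (F : fieldType) (N : nat) (f : 'I_N -> option F).

Definition label_mx : 'M[F]_N := \matrix_(u, v) sqdist (f u) (f v).

Definition label_veronese : 'M[F]_(N, 3) := \matrix_(u, k) veronese (f u) ord0 k.

Lemma label_mx_factor :
  label_mx = label_veronese *m sqdist_gram F *m label_veronese^T.
Proof.
apply/matrixP => u v; rewrite mxE sqdist_veronese !mxE.
apply: eq_bigr => k _; rewrite !mxE; congr (_ * _).
by apply: eq_bigr => l _; rewrite !mxE.
Qed.

Lemma label_mx_rank : (\rank label_mx <= 3)%N.
Proof. by rewrite label_mx_factor; exact: mulmx_max_rank. Qed.

Lemma label_mx_sym : label_mx^T = label_mx.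
Proof. by apply/matrixP => u v; rewrite !mxE sqdistC. Qed.

Lemma label_mx_inS (G : rel 'I_N) :
  (forall u v, G u v = (f u != f v)) -> inS G label_mx.
Proof.
move=> G_labels; apply/andP; split; first by rewrite label_mx_sym.
apply/forallP => u; apply/forallP => v; apply/implyP => _.
by rewrite mxE sqdist_eq0 G_labels.
Qed.

End LabelledMatrix.
Arguments label_mx {F N}.
Arguments label_mx_rank {F N}.

Theorem mainTheorem18 (F : finFieldType) (n : nat) (s : 'I_n -> nat)
  (hs : forall k, (0 < s k)%N)
  (N : nat) (p : 'I_N -> 'I_n)
  (hp : forall k, #|[set v | p v == k]| = s k)
  (hq : (n.-1 <= #|F|)%N) :
  (mr F (multipartite_adj p) <= 3)%N.
Proof.
have le_n_P1 : (n <= #|{: option F}|)%N.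
  by rewrite card_option -ltnS (leq_ltn_trans (leqSpred n)).
have [g g_inj] := ord_injection le_n_P1.
have A_inS : inS (multipartite_adj p) (label_mx (g \o p)).
  by apply: label_mx_inS => u v; rewrite /= (inj_eq g_inj).
exact: leq_trans (mr_le_rank A_inS) (label_mx_rank (g \o p)).
Qed.
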